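(* In $G_3$, the subsemigroup generated by $A=\{a,b,c\}$ is free of rank $3$ (i.e., two words over $A$, without inverses, represent the same element of $G_3$ only if they are identical).
   Context: Let $X=\{1,2,3\}$ and $T$ the ternary rooted tree with vertex set $X^*$. $\mathrm{Aut}(T)$ is the group of root-preserving automorphisms with product left-to-right: $(gh)(u)=h(g(u))$. Sections $g|_u$ are defined by $g(uv)=g(u)\,g|_u(v)$; we write $g=(g|_1,g|_2,g|_3)\lambda_g$ with $\lambda_g\in S_3$ the action on the first level, so $g(xw)=\lambda_g(x)g|_x(w)$; $e$ is the identity. $G_3=\langle a,b,c\rangle\le\mathrm{Aut}(T)$ with $a=(a,b,e)(1\,2)$, $b=(e,b,c)(2\,3)$, $c=(a,e,c)(3\,1)$. *)

From Stdlib Require Import List.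
Import ListNotations.

(* Alphabet X = {1,2,3}; vertices of the ternary rooted tree are words X^*. *)
Inductive X : Type := x1 | x2 | x3.

Inductive gen : Type := ga | gb | gc.

(* Action of a generator on a vertex, following the wreath recursion
   a = (a,b,e)(1 2), b = (e,b,c)(2 3), c = (a,e,c)(3 1):
   g(x w) = lambda_g(x) g|_x(w). *)
Fixpoint act (g : gen) (u : list X) : list X :=
  match u with
  | [] => []
  | x :: w =>
    match g, x with
    | ga, x1 => x2 :: act ga w
    | ga, x2 => x1 :: act gb w
    | ga, x3 => x3 :: w
    | gb, x1 => x1 :: w
    | gb, x2 => x3 :: act gb w
    | gb, x3 => x2 :: act gc w
    | gc, x1 => x3 :: act ga w
    | gc, x2 => x2 :: w
    | gc, x3 => x1 :: act gc w
    end
  end.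

(* The element of G_3 represented by a positive word l1 l2 ... ln, with the
   left-to-right product (gh)(u) = h(g(u)): it maps u to ln(...(l1(u))). *)
Definition eval_word (s : list gen) (u : list X) : list X :=
  fold_left (fun v g => act g v) s u.

(* Each generator has trivial section at the one letter it fixes and section
   L(x) at the two letters x it moves, where L(1) = a, L(2) = b, L(3) = c.
   Hence the section of a positive word w at x is a positive word listing L(v)
   for each vertex v left by the path of x under the prefixes of w; it is no
   longer than w, the three sections have total length 2|w|, and together with
   the image of x it determines the first-level path of x.  Equal words have
   equal sections, which allows induction on length.
   A nonempty word w representing the identity: if all its sections are
   nonempty, one is strictly shorter and still the identity; if one is empty,
   then w = g g ..., and some section of g g ... starts with two distinct
   letters, so that section falls under the first case.
   Two nonempty words: nonempty sections at x both start with L(x), which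
   cancels, so all sections agree by induction; the first letter is then read
   off the second vertex of the path of a point it moves, and we recurse. *)

From Stdlib Require Import List Lia.
Import ListNotations.

Definition root_perm (g : gen) (x : X) : X :=
  match g, x with
  | ga, x1 => x2 | ga, x2 => x1 | ga, x3 => x3
  | gb, x1 => x1 | gb, x2 => x3 | gb, x3 => x2
  | gc, x1 => x3 | gc, x2 => x2 | gc, x3 => x1
  end.

Definition letter (x : X) : gen :=
  match x with x1 => ga | x2 => gb | x3 => gc end.

Definition vertex_of_letter (g : gen) : X :=
  match g with ga => x1 | gb => x2 | gc => x3 end.

Definition gen_section (g : gen) (x : X) : list gen :=
  match g, x with
  | ga, x3 | gb, x1 | gc, x2 => []
  | _, _ => [letter x]
  end.

Fixpoint word_section (s : list gen) (x : X) : list gen :=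
  match s with
  | [] => []
  | g :: s' => gen_section g x ++ word_section s' (root_perm g x)
  end.

Fixpoint word_root (s : list gen) (x : X) : X :=
  match s with
  | [] => x
  | g :: s' => word_root s' (root_perm g x)
  end.

Definition same_elt (s t : list gen) : Prop :=
  forall u, eval_word s u = eval_word t u.

Lemma root_perm_involutive g x : root_perm g (root_perm g x) = x.
Proof. destruct g, x; reflexivity. Qed.

Lemma act_cons g x w :
  act g (x :: w) = root_perm g x :: eval_word (gen_section g x) w.
Proof. destruct g, x; reflexivity. Qed.

Lemma eval_word_cons s : forall x w,
  eval_word s (x :: w) = word_root s x :: eval_word (word_section s x) w.
Proof.
  induction s as [|g s IH]; intros x w; [reflexivity|].
  change (eval_word (g :: s) (x :: w)) with (eval_word s (act g (x :: w))).
  rewrite act_cons, IH. unfold eval_word. simpl. rewrite fold_left_app.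
  reflexivity.
Qed.

Lemma same_elt_root s t x : same_elt s t -> word_root s x = word_root t x.
Proof. intros H. specialize (H [x]). rewrite !eval_word_cons in H. congruence. Qed.

Lemma same_elt_section s t x :
  same_elt s t -> same_elt (word_section s x) (word_section t x).
Proof. intros H w. specialize (H (x :: w)). rewrite !eval_word_cons in H. congruence. Qed.

Fixpoint act_inv (g : gen) (u : list X) : list X :=
  match u with
  | [] => []
  | y :: w =>
    match g, y with
    | ga, x2 => x1 :: act_inv ga w
    | ga, x1 => x2 :: act_inv gb w
    | ga, x3 => x3 :: w
    | gb, x1 => x1 :: w
    | gb, x3 => x2 :: act_inv gb w
    | gb, x2 => x3 :: act_inv gc w
    | gc, x3 => x1 :: act_inv ga w
    | gc, x2 => x2 :: w
    | gc, x1 => x3 :: act_inv gc w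
    end
  end.

Lemma act_act_inv u : forall g, act g (act_inv g u) = u.
Proof.
  induction u as [|y w IH]; intros g; [reflexivity|].
  destruct g, y; simpl; rewrite ?IH; reflexivity.
Qed.

Lemma same_elt_cons_inv g s t : same_elt (g :: s) (g :: t) -> same_elt s t.
Proof.
  intros H v. specialize (H (act_inv g v)).
  change (eval_word s (act g (act_inv g v)) = eval_word t (act g (act_inv g v))) in H.
  rewrite act_act_inv in H. exact H.
Qed.

Lemma word_section_length_le s : forall x, length (word_section s x) <= length s.
Proof.
  induction s as [|g s IH]; intros x; simpl; [lia|].
  rewrite length_app. specialize (IH (root_perm g x)). destruct g, x; simpl in *; lia.
Qed.

Lemma word_section_length_sum s :
  length (word_section s x1) + length (word_section s x2) + length (word_section s x3)
  = 2 * length s.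
Proof.
  induction s as [|g s IH]; simpl; [reflexivity|].
  destruct g; simpl; rewrite ?length_app in *; simpl; lia.
Qed.

Lemma word_section_head s : forall x,
  word_section s x = [] \/ exists r, word_section s x = letter x :: r.
Proof. induction s as [|g s IH]; intros x; simpl; [auto|]. destruct g, x; simpl; eauto. Qed.

Lemma word_root_section_nil s : forall x, word_section s x = [] -> word_root s x = x.
Proof.
  induction s as [|g s IH]; intros x H; simpl; [reflexivity|].
  destruct g, x; simpl in *; try discriminate; apply IH; assumption.
Qed.

(* The vertex reached after the first move of [x]; a section letter [letter v]
   is emitted exactly when the path leaves [v]. *)
Definition second_vertex (s : list gen) (x : X) : option X :=
  match word_section s x with
  | _ :: v :: _ => Some (vertex_of_letter v)
  | [_] => Some (word_root s x)
  | [] => None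
  end.

Lemma second_vertex_cons g s x :
  gen_section g x <> [] -> second_vertex (g :: s) x = Some (root_perm g x).
Proof.
  intros Hg. unfold second_vertex. simpl.
  destruct (word_section_head s (root_perm g x)) as [Hs|[r Hs]].
  - pose proof (word_root_section_nil _ _ Hs) as Hroot.
    destruct g, x; simpl in *; try contradiction; rewrite Hs, Hroot; reflexivity.
  - destruct g, x; simpl in *; try contradiction; rewrite Hs; reflexivity.
Qed.

Lemma gen_separated_by_root g h : g <> h ->
  exists x, gen_section g x <> [] /\ gen_section h x <> [] /\ root_perm g x <> root_perm h x.
Proof.
  intros Hgh.
  destruct g, h; try congruence;
    [ exists x2 | exists x1 | exists x2 | exists x3 | exists x1 | exists x3 ];
    simpl; repeat split; discriminate.
Qed.

Lemma word_eq_of_sections s : forall t,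
  (forall x, word_root s x = word_root t x) ->
  (forall x, word_section s x = word_section t x) -> s = t.
Proof.
  induction s as [|g s IH]; intros [|h t] Hroot Hsec.
  - reflexivity.
  - specialize (Hsec (vertex_of_letter h)). destruct h; discriminate.
  - specialize (Hsec (vertex_of_letter g)). destruct g; discriminate.
  - assert (Hgh : g = h).
    { assert (Hdec : {g = h} + {g <> h}) by decide equality.
      destruct Hdec as [|Hne]; [assumption|exfalso].
      destruct (gen_separated_by_root g h Hne) as (x & Hg & Hh & Hx).
      assert (E : second_vertex (g :: s) x = second_vertex (h :: t) x)
        by (unfold second_vertex; rewrite Hsec, Hroot; reflexivity).
      rewrite !second_vertex_cons in E by assumption. congruence. }
    subst h. f_equal. apply IH; intros y.
    + specialize (Hroot (root_perm g y)). simpl in Hroot.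
      rewrite root_perm_involutive in Hroot. exact Hroot.
    + specialize (Hsec (root_perm g y)). simpl in Hsec.
      rewrite root_perm_involutive in Hsec. eapply app_inv_head. exact Hsec.
Qed.

Lemma shorter_nonempty_section w :
  w <> [] -> (forall y, word_section w y <> []) ->
  exists y, word_section w y <> [] /\ length (word_section w y) < length w.
Proof.
  intros Hw Hnz. pose proof (word_section_length_sum w) as Hsum.
  destruct w as [|g w]; [congruence|].
  change (length (g :: w)) with (S (length w)) in *.
  destruct (Compare_dec.lt_dec (length (word_section (g :: w) x1)) (S (length w)));
    [exists x1; auto|].
  destruct (Compare_dec.lt_dec (length (word_section (g :: w) x2)) (S (length w)));
    [exists x2; auto|].
  exists x3. split; [auto|lia].
Qed.

Lemma word_section_distinct_nonempty u v r y :
  u <> v -> word_section (u :: v :: r) y <> [].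
Proof. intros Huv. destruct u, v; try congruence; destruct y; simpl; discriminate. Qed.

Lemma word_section_nil_repeat g h r z : word_section (g :: h :: r) z = [] -> h = g.
Proof. destruct g, z; simpl; try discriminate; destruct h; simpl; congruence. Qed.

Lemma word_section_square g r :
  exists x u v rest, word_section (g :: g :: r) x = u :: v :: rest /\ u <> v.
Proof.
  destruct g; [exists x1, ga, gb | exists x2, gb, gc | exists x1, ga, gc];
    eexists; (split; [reflexivity | discriminate]).
Qed.

Lemma letter_nontrivial g : ~ same_elt [] [g].
Proof. intros H. specialize (H [vertex_of_letter g]). destruct g; discriminate. Qed.

Lemma same_elt_nil n : forall w, length w <= n -> same_elt [] w -> w = [].
Proof.
  induction n as [|n IH]; intros w Hlen Hid; [destruct w; simpl in *; [reflexivity|lia]|].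
  assert (Hdescent : forall w', length w' <= S n -> w' <> [] -> same_elt [] w' ->
                     (forall y, word_section w' y <> []) -> False).
  { intros w' Hlen' Hw' Hid' Hnz.
    destruct (shorter_nonempty_section w' Hw' Hnz) as (y & Hy & Hshort).
    apply Hy. apply IH; [lia|].
    exact (same_elt_section [] w' y Hid'). }
  destruct w as [|g w]; [reflexivity|exfalso].
  assert (Hcases : (forall y, word_section (g :: w) y <> []) \/
                   exists z, word_section (g :: w) z = []).
  { destruct (word_section (g :: w) x1) eqn:E1; [eauto|].
    destruct (word_section (g :: w) x2) eqn:E2; [eauto|].
    destruct (word_section (g :: w) x3) eqn:E3; [eauto|].
    left; intros []; congruence. }
  destruct Hcases as [Hnz | (z & Hz)].
  - exact (Hdescent (g :: w) Hlen ltac:(discriminate) Hid Hnz).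
  - destruct w as [|h r]; [exact (letter_nontrivial g Hid)|].
    apply word_section_nil_repeat in Hz. subst h.
    destruct (word_section_square g r) as (x & u & v & rest & Hx & Huv).
    pose proof (same_elt_section _ _ x Hid) as Hidx. rewrite Hx in Hidx.
    pose proof (word_section_length_le (g :: g :: r) x) as Hlenx. rewrite Hx in Hlenx.
    apply (Hdescent (u :: v :: rest)); [lia | discriminate | assumption |].
    intros y. apply word_section_distinct_nonempty. assumption.
Qed.

Lemma same_elt_eq n : forall s t, length s + length t <= n -> same_elt s t -> s = t.
Proof.
  induction n as [|n IH]; intros s t Hlen Heq.
  - destruct s, t; simpl in *; [reflexivity | lia..].
  - destruct s as [|g s], t as [|h t].
    + reflexivity.
    + symmetry. exact (same_elt_nil _ (h :: t) (le_n _) Heq).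
    + apply (same_elt_nil _ (g :: s) (le_n _)). intros u. symmetry. apply Heq.
    + apply word_eq_of_sections; intros x; [exact (same_elt_root _ _ x Heq)|].
      pose proof (same_elt_section _ _ x Heq) as Hx.
      pose proof (word_section_length_le (g :: s) x) as Hs.
      pose proof (word_section_length_le (h :: t) x) as Ht.
      destruct (word_section_head (g :: s) x) as [Es|[r Es]],
               (word_section_head (h :: t) x) as [Et|[r' Et]];
        rewrite Es, Et in *.
      * reflexivity.
      * apply IH; [simpl in *; lia | exact Hx].
      * apply IH; [simpl in *; lia | exact Hx].
      * f_equal. apply IH; [simpl in *; lia|]. exact (same_elt_cons_inv _ _ _ Hx).
Qed.

Theorem theorem5p2 :
  forall s t : list gen,
    (forall u : list X, eval_word s u = eval_word t u) -> s = t.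
Proof. intros s t Heq. exact (same_elt_eq _ s t (le_n _) Heq). Qed.
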